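(* Let $P=(p_1,\dots,p_n)$ be points in $\mathbb{R}^d$, $k\ge1$, and $\mathcal{F}$ a constraint for $k$-CMeans. Let $\lambda\ge1$ and let $\mathcal{C}=\{c_1,\dots,c_k\}\subset\mathbb{R}^d$ be the centers of a $\lambda$-approximate solution of the ordinary (unconstrained) $k$-means problem on $P$. Then the Cartesian product $[\mathcal{C}]^k=\mathcal{C}\times\cdots\times\mathcal{C}$ ($k$ factors) contains a $k$-tuple $(q_1,\dots,q_k)$ for which there is $(S_1,\dots,S_k)\in\mathcal{F}$ with $\frac1n\sum_{j=1}^k\sum_{i\in S_j}\|p_i-q_j\|^2\le(18\lambda+16)\,\delta^2_{opt}$.
   Context: A constraint for $k$-CMeans is a nonempty family $\mathcal{F}$ of ordered partitions $(S_1,\dots,S_k)$ of the index set $\{1,\dots,n\}$ into $k$ parts; $\delta^2_{opt}=\min_{(S_j)\in\mathcal{F}}\min_{c'_1,\dots,c'_k\in\mathbb{R}^d}\frac1n\sum_j\sum_{i\in S_j}\|p_i-c'_j\|^2$. The unconstrained $k$-means cost of a set $\mathcal{C}$ of $k$ points is $\omega=\frac1n\sum_{i=1}^n\min_{c\in\mathcal{C}}\|p_i-c\|^2$; $\mathcal{C}$ is a $\lambda$-approximate solution if $\omega\le\lambda\cdot\min_{|\mathcal{C}'|= k}\frac1n\sum_i\min_{c\in\mathcal{C}'}\|p_i-c\|^2$. *)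

From HB Require Import structures.
From mathcomp Require Import all_boot all_order all_algebra.
From mathcomp Require Import classical_sets reals.
Set Implicit Arguments. Unset Strict Implicit. Unset Printing Implicit Defensive.
Import Order.TTheory GRing.Theory Num.Theory.
Local Open Scope ring_scope.
Local Open Scope classical_set_scope.

Section KMeans.
Variables (R : realType) (d n k : nat).

Definition sqnorm (v : 'rV[R]_d) : R := \sum_(l < d) (v ord0 l) ^+ 2.

Definition cluster_cost (p : 'I_n -> 'rV[R]_d)
  (S : {ffun 'I_k -> {set 'I_n}}) (q : 'I_k -> 'rV[R]_d) : R :=
  n%:R^-1 * \sum_(j < k) \sum_(i in S j) sqnorm (p i - q j).

(* ordered partition (S_1,...,S_k) of {1..n} into k (possibly empty) parts *)
Definition is_ordered_partition (S : {ffun 'I_k -> {set 'I_n}}) : Prop :=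
  (forall j j' : 'I_k, j != j' -> (S j :&: S j' == finset.set0)) /\
  (forall i : 'I_n, exists j : 'I_k, i \in S j).

Definition is_constraint (F : {set {ffun 'I_k -> {set 'I_n}}}) : Prop :=
  F != finset.set0 /\ (forall S, S \in F -> is_ordered_partition S).

Definition delta2_opt (p : 'I_n -> 'rV[R]_d)
  (F : {set {ffun 'I_k -> {set 'I_n}}}) : R :=
  inf [set x | exists S c', S \in F /\ x = cluster_cost p S c'].

Definition kmeans_cost (p : 'I_n -> 'rV[R]_d) (c : 'I_k -> 'rV[R]_d) : R :=
  n%:R^-1 * \sum_(i < n) inf [set sqnorm (p i - c m) | m in [set: 'I_k]].

Definition opt_kmeans (p : 'I_n -> 'rV[R]_d) : R :=
  inf [set kmeans_cost p c' | c' in [set c' : 'I_k -> 'rV[R]_d | injective c']].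

Definition is_approx_solution (lam : R) (p : 'I_n -> 'rV[R]_d)
  (c : 'I_k -> 'rV[R]_d) : Prop :=
  injective c /\ kmeans_cost p c <= lam * opt_kmeans p.

End KMeans.

From mathcomp Require Import all_boot all_order all_algebra.
From mathcomp Require Import classical_sets reals.
From mathcomp Require Import lra.
Import Order.TTheory GRing.Theory Num.Theory.
Local Open Scope ring_scope.
Local Open Scope classical_set_scope.

(* Snap every center of a constrained solution (S, c') to its nearest point of
   C.  Applying ||a - e||^2 <= 2 ||a - b||^2 + 2 ||b - e||^2 twice, through p_i
   and through the point of C nearest to p_i, the snapped solution costs at
   most 6 cost(S, c') + 4 omega.  Every constrained solution is also an
   unconstrained one (its centers can be padded to k distinct points, which
   exist since C has k of them), so omega <= lam OPT <= lam delta^2_opt and the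
   best tuple of C^k costs at most (4 lam + 6) delta^2_opt. *)

Lemma injective_cover {T : eqType} {k : nat} (c0 c : 'I_k -> T) :
  injective c0 ->
  exists2 c' : 'I_k -> T, injective c' & forall m, exists m', c' m' = c m.
Proof.
move=> /injectiveP uniq_c0.
set A := undup (codom c).
set s := A ++ [seq x <- codom c0 | x \notin A].
have uniq_s : uniq s.
  rewrite cat_uniq undup_uniq filter_uniq // andbT /=.
  by apply/hasPn => x; rewrite mem_filter => /andP[].
have size_A : (size A <= k)%N by rewrite -[k]card_ord -(size_codom c) size_undup.
have k_le_s : (k <= size s)%N.
  rewrite size_cat size_filter -[X in (X <= _)%N]card_ord -(size_codom c0).
  rewrite -(count_predC (mem A)); apply: leq_add => //.
  rewrite -size_filter uniq_leq_size ?filter_uniq //.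
  by move=> x; rewrite mem_filter => /andP[].
exists (fun j => nth (c j) s j).
  move=> i j /eqP; rewrite (set_nth_default (c i) (c j)) ?(leq_trans (ltn_ord j)) //.
  by rewrite nth_uniq ?(leq_trans (ltn_ord _)) // => /eqP/val_inj.
move=> m; have cm_A : c m \in A by rewrite mem_undup codom_f.
have idx_k : (index (c m) A < k)%N by rewrite (leq_trans _ size_A) ?index_mem.
by exists (Ordinal idx_k); rewrite /= nth_cat index_mem cm_A nth_index.
Qed.

Lemma inf_image_min {R : realType} {I : finType} (i0 : I) (f : I -> R) :
  exists2 m, inf [set f m | m in [set: I]] = f m & forall m', f m <= f m'.
Proof.
have [m _ f_min] := @arg_minP _ R I i0 predT f isT.
have f_lb : lbound [set f m | m in [set: I]] (f m) by move=> _ [x _ <-]; apply: f_min.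
exists m => [|m']; last exact: f_min.
apply/le_anti/andP; split; first by apply: ge_inf; [exists (f m) | exists m].
by apply: lb_le_inf => //; exists (f m), m.
Qed.

Lemma sum_ordered_partition {V : nmodType} {n k : nat}
    {S : {ffun 'I_k -> {set 'I_n}}} (h : 'I_n -> V) :
  is_ordered_partition S -> \sum_(j < k) \sum_(i in S j) h i = \sum_(i < n) h i.
Proof.
move=> [disjS coverS].
under eq_bigr do rewrite big_mkcond.
rewrite exchange_big; apply: eq_bigr => i _ /=.
have [j0 i_Sj0] := coverS i.
rewrite (bigD1 j0) //= i_Sj0 big1 ?addr0 // => j j_neq.
case: ifP => // i_Sj; have := disjS j0 j; rewrite eq_sym j_neq => /(_ isT) /eqP.
by move/setP/(_ i); rewrite inE i_Sj0 i_Sj inE.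
Qed.

Section KMeansCost.
Context {R : realType} {d n k : nat}.
Hypothesis k_gt0 : (0 < k)%N.

Lemma sqnorm_ge0 (v : 'rV[R]_d) : 0 <= sqnorm v.
Proof. by apply: sumr_ge0 => l _; apply: sqr_ge0. Qed.

Lemma sqnormBC (u v : 'rV[R]_d) : sqnorm (u - v) = sqnorm (v - u).
Proof. by rewrite -opprB /sqnorm; apply: eq_bigr => l _; rewrite mxE sqrrN. Qed.

Lemma sqnormD_le (u v : 'rV[R]_d) :
  sqnorm (u + v) <= 2 * sqnorm u + 2 * sqnorm v.
Proof.
rewrite /sqnorm !mulr_sumr -big_split /=; apply: ler_sum => l _.
by rewrite mxE; have := sqr_ge0 (u ord0 l - v ord0 l); nra.
Qed.

Lemma sqnormB_le (a b e : 'rV[R]_d) :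
  sqnorm (a - e) <= 2 * sqnorm (a - b) + 2 * sqnorm (b - e).
Proof. by have := sqnormD_le (a - b) (b - e); rewrite addrA subrK. Qed.

Let nearest_distE (c : 'I_k -> 'rV[R]_d) (x : 'rV[R]_d) :
  exists2 m, inf [set sqnorm (x - c m) | m in [set: 'I_k]] = sqnorm (x - c m)
           & forall m', sqnorm (x - c m) <= sqnorm (x - c m').
Proof. exact: inf_image_min (Ordinal k_gt0) _. Qed.

Lemma kmeans_cost_ge0 (p : 'I_n -> 'rV[R]_d) (c : 'I_k -> 'rV[R]_d) :
  0 <= kmeans_cost p c.
Proof.
rewrite /kmeans_cost mulr_ge0 ?invr_ge0 // sumr_ge0 // => i _.
by have [m -> _] := nearest_distE c (p i); apply: sqnorm_ge0.
Qed.

Lemma kmeans_cost_le_cluster_cost (p : 'I_n -> 'rV[R]_d) S (c : 'I_k -> 'rV[R]_d) :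
  is_ordered_partition S -> kmeans_cost p c <= cluster_cost p S c.
Proof.
move=> partS; rewrite /kmeans_cost /cluster_cost ler_wpM2l ?invr_ge0 //.
rewrite -(sum_ordered_partition _ partS); apply: ler_sum => j _; apply: ler_sum => i _.
by have [m -> m_min] := nearest_distE c (p i); apply: m_min.
Qed.

Lemma kmeans_cost_cover_le (p : 'I_n -> 'rV[R]_d) (c c' : 'I_k -> 'rV[R]_d) :
  (forall m, exists m', c' m' = c m) -> kmeans_cost p c' <= kmeans_cost p c.
Proof.
move=> c_sub_c'; rewrite /kmeans_cost ler_wpM2l ?invr_ge0 //.
apply: ler_sum => i _.
have [m -> _] := nearest_distE c (p i); have [m' -> m'_min] := nearest_distE c' (p i).
by have [m'' <-] := c_sub_c' m; apply: m'_min.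
Qed.

Lemma opt_kmeans_le (p : 'I_n -> 'rV[R]_d) (c : 'I_k -> 'rV[R]_d) :
  injective c -> opt_kmeans k p <= kmeans_cost p c.
Proof.
move=> inj_c; apply: ge_inf; last by exists c.
by exists 0 => _ [c' _ <-]; apply: kmeans_cost_ge0.
Qed.

Lemma opt_kmeans_le_cluster_cost (p : 'I_n -> 'rV[R]_d) S (c0 c : 'I_k -> 'rV[R]_d) :
  injective c0 -> is_ordered_partition S -> opt_kmeans k p <= cluster_cost p S c.
Proof.
move=> inj_c0 partS; have [c' inj_c' c_sub_c'] := injective_cover _ c inj_c0.
apply: le_trans (opt_kmeans_le p c' inj_c') _.
apply: le_trans (kmeans_cost_cover_le p c c' c_sub_c') _.
exact: kmeans_cost_le_cluster_cost.
Qed.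

Lemma snap_to_centers (p : 'I_n -> 'rV[R]_d) S (c c' : 'I_k -> 'rV[R]_d) :
  is_ordered_partition S ->
  exists t : {ffun 'I_k -> 'I_k},
    cluster_cost p S (c \o t) <= 6 * cluster_cost p S c' + 4 * kmeans_cost p c.
Proof.
move=> partS.
have /fin_all_exists [t t_near] j :
    exists tj, forall m, sqnorm (c' j - c tj) <= sqnorm (c' j - c m).
  by have [m _ m_min] := nearest_distE c (c' j); exists m.
exists [ffun j => t j]; rewrite /cluster_cost /kmeans_cost.
rewrite mulrCA [4 * _]mulrCA -mulrDr ler_wpM2l ?invr_ge0 //.
rewrite -(sum_ordered_partition _ partS) !mulr_sumr -big_split ler_sum // => j _.
rewrite !mulr_sumr -big_split ler_sum // => i _ /=; rewrite ffunE.
have [m -> m_min] := nearest_distE c (p i).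
have snap_pi := sqnormB_le (p i) (c' j) (c (t j)).
have via_m := sqnormB_le (c' j) (p i) (c m).
have := t_near j m; rewrite [sqnorm (c' j - p i)]sqnormBC in via_m; lra.
Qed.

End KMeansCost.

Lemma le_delta2_opt (R : realType) (d n k : nat) (p : 'I_n -> 'rV[R]_d)
    (F : {set {ffun 'I_k -> {set 'I_n}}}) (x : R) :
  F != finset.set0 ->
  (forall S c', S \in F -> x <= cluster_cost p S c') -> x <= delta2_opt p F.
Proof.
case/set0Pn=> S0 S0_F x_lb; apply: lb_le_inf.
  by exists (cluster_cost p S0 (fun=> 0)), S0, (fun=> 0).
by move=> _ [S [c' [S_F ->]]]; apply: x_lb.
Qed.

Theorem theorem2 (R : realType) (d n k : nat) (p : 'I_n -> 'rV[R]_d)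
  (F : {set {ffun 'I_k -> {set 'I_n}}}) (lam : R) (c : 'I_k -> 'rV[R]_d) :
  (0 < k)%N -> is_constraint F -> 1 <= lam -> is_approx_solution lam p c ->
  exists q : 'I_k -> 'rV[R]_d,
    (forall j : 'I_k, exists m : 'I_k, q j = c m) /\
    exists2 S, S \in F &
      cluster_cost p S q <= (18 * lam + 16) * delta2_opt p F.
Proof.
move=> k_gt0 [F_neq0 F_part] lam_ge1 [inj_c c_approx].
set delta := delta2_opt p F.
have delta_ge0 : 0 <= delta.
  apply: le_delta2_opt => // S c' S_F; apply: le_trans (kmeans_cost_ge0 k_gt0 p c') _.
  exact: kmeans_cost_le_cluster_cost (F_part S S_F).
have opt_le_delta : opt_kmeans k p <= delta.
  apply: le_delta2_opt => // S c' S_F.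
  exact: opt_kmeans_le_cluster_cost k_gt0 p S c c' inj_c (F_part S S_F).
have c_cost : kmeans_cost p c <= lam * delta.
  by apply: le_trans c_approx _; rewrite ler_wpM2l // (le_trans ler01).
have /set0Pn [S0 S0_F] := F_neq0.
pose snapped := ({ffun 'I_k -> {set 'I_n}} * {ffun 'I_k -> 'I_k})%type.
have [u u_F best] := @arg_minP _ R snapped (S0, [ffun=> Ordinal k_gt0])
  (fun u => u.1 \in F) (fun u => cluster_cost p u.1 (c \o u.2)) S0_F.
exists (c \o u.2); split; first by move=> j; exists (u.2 j).
exists u.1 => //; set g := cluster_cost _ _ _.
suff : (g - 4 * lam * delta) / 6 <= delta by nra.
apply: le_delta2_opt => // S' c' S'_F.
have [t' snap_t'] := snap_to_centers k_gt0 p S' c c' (F_part S' S'_F).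
have := best (S', t') S'_F; rewrite -/g; lra.
Qed.
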